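(* Let $u$ be the solution of the Cauchy problem in the context. Then for every $t>0$ and all $x\in[0,1]$, \[ 0\le\partial_xu(x,t)\le e^{(\sigma-m_0f_0-m_1f_1)t}. \]
   Context: Constants: $f_0>0$, $f_1\ge0$ with selection rate $\sigma=f_0-f_1>0$; $\lambda_0,\lambda_1\ge0$; $\gamma_0,\gamma_1\in(0,1]$; $m_0=\lambda_0\gamma_0$, $m_1=\lambda_1\gamma_1$. With $\mathcal{J}_0u(x,t)=u(x+\gamma_0(1-x),t)-u(x,t)$ and $\mathcal{J}_1u(x,t)=u(x-\gamma_1x,t)-u(x,t)$, $u$ is the unique (mild) solution, which is $C^\infty$ on $[0,1]\times[0,\infty)$, of \[ \partial_tu+\sigma(1-x)x\,\partial_xu=\lambda_0f_0\mathcal{J}_0u+\lambda_1f_1\mathcal{J}_1u\ (0\le x\le1,\ t>0),\quad u(x,0)=x. \] *)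

From Stdlib Require Import Reals.
From Coquelicot Require Import Coquelicot.
Open Scope R_scope.

Definition dom (x t : R) : Prop := 0 <= x <= 1 /\ 0 <= t.

Definition is_pderiv_x (u ux : R -> R -> R) : Prop :=
  forall x t, dom x t ->
    filterlim (fun h => (u (x + h) t - u x t) / h)
      (within (fun h => h <> 0 /\ 0 <= x + h <= 1) (locally 0))
      (locally (ux x t)).

Definition is_pderiv_t (u ut : R -> R -> R) : Prop :=
  forall x t, dom x t ->
    filterlim (fun h => (u x (t + h) - u x t) / h)
      (within (fun h => h <> 0 /\ 0 <= t + h) (locally 0))
      (locally (ut x t)).

Definition cont_on_dom (v : R -> R -> R) : Prop :=
  forall x t, dom x t ->
    filterlim (fun p : R * R => v (fst p) (snd p))
      (within (fun p : R * R => dom (fst p) (snd p)) (locally (x, t)))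
      (locally (v x t)).

Definition C1_on_dom (u ux ut : R -> R -> R) : Prop :=
  is_pderiv_x u ux /\ is_pderiv_t u ut /\ cont_on_dom ux /\ cont_on_dom ut.

Definition J0 (g0 : R) (u : R -> R -> R) (x t : R) : R :=
  u (x + g0 * (1 - x)) t - u x t.
Definition J1 (g1 : R) (u : R -> R -> R) (x t : R) : R :=
  u (x - g1 * x) t - u x t.

Definition is_solution (f0 f1 l0 l1 g0 g1 : R) (u ux ut : R -> R -> R) : Prop :=
  C1_on_dom u ux ut /\
  (forall x t, 0 <= x <= 1 -> 0 < t ->
     ut x t + (f0 - f1) * (1 - x) * x * ux x t
     = l0 * f0 * J0 g0 u x t + l1 * f1 * J1 g1 u x t) /\
  (forall x, 0 <= x <= 1 -> u x 0 = x).

(* Doubling of variables.  For s <= a, a >= 0 and eps > 0 put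
     Phi(x, y, t) = s (u(y,t) - u(x,t)) - a e^(c t) (y - x) - eps e^t,   0 <= x <= y <= 1,
   where c is the claimed exponent.  Phi < 0 at t = 0.  If Phi ever reached 0, then at the
   first such time t0, at a point (x0, y0) with x0 < y0, Phi(., ., t0) would be maximal:
   the first-order conditions in x and y control the drift terms, and the jump points of
   x0 and y0 lie again in the triangle at a distance shrunk by the factor 1 - gamma, so
   maximality controls the jump terms.  The equation then gives dPhi/dt <= -eps e^t0 < 0,
   contradicting that Phi increased to 0.  Letting eps -> 0 with (s, a) = (-1, 0) and
   (1, 1) yields 0 <= u(y,t) - u(x,t) <= e^(c t) (y - x), hence the bounds on u_x. *)

From Stdlib Require Import Reals Lra.
From Coquelicot Require Import Coquelicot.
From mathcomp Require all_boot all_order all_algebra all_classical all_reals all_analysis.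
From mathcomp Require Rstruct Rstruct_topology.
Open Scope R_scope.

Section RealLimits.
Context {T : Type} {F : (T -> Prop) -> Prop} {FF : Filter F}.

Lemma filterlim_Rplus (f g : T -> R) (a b : R) :
  filterlim f F (locally a) -> filterlim g F (locally b) ->
  filterlim (fun z => f z + g z) F (locally (a + b)).
Proof. intros Hf Hg; exact (filterlim_comp_2 f g Rplus Hf Hg (filterlim_plus a b)). Qed.

Lemma filterlim_Rmult (f g : T -> R) (a b : R) :
  filterlim f F (locally a) -> filterlim g F (locally b) ->
  filterlim (fun z => f z * g z) F (locally (a * b)).
Proof. intros Hf Hg; exact (filterlim_comp_2 f g Rmult Hf Hg (filterlim_mult a b)). Qed.

Lemma filterlim_Rmult_l (k : R) (f : T -> R) (a : R) :
  filterlim f F (locally a) -> filterlim (fun z => k * f z) F (locally (k * a)).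
Proof. apply filterlim_Rmult, filterlim_const. Qed.

Lemma filterlim_Rminus (f g : T -> R) (a b : R) :
  filterlim f F (locally a) -> filterlim g F (locally b) ->
  filterlim (fun z => f z - g z) F (locally (a - b)).
Proof.
  intros Hf Hg; apply filterlim_Rplus; [exact Hf|].
  exact (filterlim_comp _ _ _ g Ropp F _ _ Hg (filterlim_opp b)).
Qed.

Lemma filterlim_le_frequently (f : T -> R) (L c : R) :
  filterlim f F (locally L) -> (forall P, F P -> exists z, P z /\ f z <= c) -> L <= c.
Proof.
  intros Hf Hfreq; apply Rnot_lt_le; intros Hlt.
  assert (Hpos : 0 < L - c) by lra.
  destruct (Hfreq _ (proj1 (filterlim_locally f L) Hf (mkposreal _ Hpos))) as [z [Hz Hle]].
  change (Rabs (f z - L) < L - c) in Hz; apply Rabs_def2 in Hz; lra.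
Qed.

Lemma filterlim_ge_frequently (f : T -> R) (L c : R) :
  filterlim f F (locally L) -> (forall P, F P -> exists z, P z /\ c <= f z) -> c <= L.
Proof.
  intros Hf Hfreq; apply Rnot_lt_le; intros Hlt.
  assert (Hpos : 0 < c - L) by lra.
  destruct (Hfreq _ (proj1 (filterlim_locally f L) Hf (mkposreal _ Hpos))) as [z [Hz Hle]].
  change (Rabs (f z - L) < c - L) in Hz; apply Rabs_def2 in Hz; lra.
Qed.

End RealLimits.

Lemma within_locally_0_frequently (D S : R -> Prop) :
  (forall d, 0 < d -> exists h, D h /\ Rabs h < d /\ S h) ->
  forall P, within D (locally 0) P -> exists h, P h /\ S h.
Proof.
  intros Hfreq P [d Hd].
  destruct (Hfreq d (cond_pos d)) as [h [Dh [Hh Sh]]].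
  exists h; split; [|exact Sh].
  apply Hd; [|exact Dh].
  change (Rabs (h - 0) < d); rewrite Rminus_0_r; exact Hh.
Qed.

Lemma derivable_pt_lim_quotient (f : R -> R) (x l : R) (D : R -> Prop) :
  derivable_pt_lim f x l -> (forall h, D h -> h <> 0) ->
  filterlim (fun h => (f (x + h) - f x) / h) (within D (locally 0)) (locally l).
Proof.
  intros Hf HD; apply filterlim_locally; intros eps.
  destruct (Hf eps (cond_pos eps)) as [d Hd].
  exists d; intros h Hh Dh.
  change (Rabs ((f (x + h) - f x) / h - l) < eps).
  apply Hd; [exact (HD h Dh)|].
  change (Rabs (h - 0) < d) in Hh; rewrite Rminus_0_r in Hh; exact Hh.
Qed.

Definition nonexpansive_at {T U : UniformSpace} (g : T -> U) (p : T) : Prop :=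
  forall d q, ball p d q -> ball (g p) d (g q).

Lemma filterlim_nonexpansive {T U : UniformSpace} (g : T -> U) (p : T) :
  nonexpansive_at g p -> filterlim g (locally p) (locally (g p)).
Proof. intros Hg P [d Hd]; exists d; intros q Hq; exact (Hd _ (Hg d q Hq)). Qed.

Lemma filterlim_within_nonexpansive {T U : UniformSpace} (g : T -> U) (A : T -> Prop) (p : T) :
  nonexpansive_at g p -> filterlim g (within A (locally p)) (locally (g p)).
Proof.
  intros Hg; apply (filterlim_filter_le_1 _ (filter_le_within _)), filterlim_nonexpansive, Hg.
Qed.

Lemma filterlim_within_within {T U : UniformSpace} (g : T -> U) (A : T -> Prop)
    (B : U -> Prop) (p : T) :
  filterlim g (locally p) (locally (g p)) -> (forall q, A q -> B (g q)) ->
  filterlim g (within A (locally p)) (within B (locally (g p))).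
Proof.
  intros Hg HAB P HP.
  apply (Hg (fun z => B z -> P z)) in HP.
  unfold within, filtermap; apply (filter_imp _ _ (fun q Hq Aq => Hq (HAB q Aq)) HP).
Qed.

Lemma Rdiv_le_of_neg (n h c : R) : h < 0 -> c * h <= n -> n / h <= c.
Proof. intros Hh Hn; replace n with (n / h * h) in Hn by (field; lra); nra. Qed.

Lemma Rdiv_ge_of_neg (n h c : R) : h < 0 -> n <= c * h -> c <= n / h.
Proof. intros Hh Hn; replace n with (n / h * h) in Hn by (field; lra); nra. Qed.

Lemma Rdiv_between (n h B : R) : h <> 0 -> 0 <= n * h <= B * (h * h) -> 0 <= n / h <= B.
Proof.
  intros Hh Hn; replace (n * h) with (n / h * (h * h)) in Hn by (field; exact Hh).
  assert (0 < h * h) by (destruct (Rlt_or_le h 0); nra); split; nra.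
Qed.

Lemma quotient_limit_continuous (g : R -> R) (z L : R) (Q : R -> Prop) :
  filterlim (fun h => (g (z + h) - g z) / h)
    (within (fun h => h <> 0 /\ Q h) (locally 0)) (locally L) ->
  forall e, 0 < e -> exists d, 0 < d /\
    forall h, Q h -> Rabs h < d -> Rabs (g (z + h) - g z) < e.
Proof.
  intros Hg e He.
  destruct (proj1 (filterlim_locally _ L) Hg (mkposreal 1 Rlt_0_1)) as [d1 Hd1].
  set (M := Rabs L + 1).
  assert (HM : 0 < M) by (unfold M; pose proof (Rabs_pos L); lra).
  exists (Rmin d1 (e / M)); split.
  { apply Rmin_pos; [apply cond_pos | apply Rdiv_lt_0_compat; lra]. }
  intros h Qh Hh.
  pose proof (Rmin_l d1 (e / M)) as Hd1h; pose proof (Rmin_r d1 (e / M)) as HeM.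
  destruct (Req_dec h 0) as [->|Hh0].
  { rewrite Rplus_0_r, Rminus_diag, Rabs_R0; exact He. }
  assert (Hq : Rabs ((g (z + h) - g z) / h - L) < 1).
  { apply (Hd1 h); [|split; assumption].
    change (Rabs (h - 0) < d1); rewrite Rminus_0_r; lra. }
  assert (Hqb : Rabs ((g (z + h) - g z) / h) <= M).
  { unfold M; pose proof (Rabs_triang_inv ((g (z + h) - g z) / h) L); lra. }
  replace (g (z + h) - g z) with (h * ((g (z + h) - g z) / h)) by (field; exact Hh0).
  rewrite Rabs_mult.
  assert (Rabs h * M < e).
  { apply (Rmult_lt_reg_r (/ M)); [apply Rinv_0_lt_compat; lra|].
    rewrite Rmult_assoc, Rinv_r, Rmult_1_r by lra; unfold Rdiv in HeM; lra. }
  pose proof (Rabs_pos h); pose proof (Rabs_pos ((g (z + h) - g z) / h)); nra.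
Qed.

(* Clamping extends g from [lo, hi] to all of R, so that one-sided derivatives at the
   endpoints suffice for [MVT_gen]. *)
Definition clamp (lo hi z : R) : R := Rmax lo (Rmin z hi).

Lemma clamp_id (lo hi z : R) : lo <= z <= hi -> clamp lo hi z = z.
Proof. intros Hz; unfold clamp; rewrite Rmin_left, Rmax_right; lra. Qed.

Lemma clamp_between (lo hi z : R) : lo <= hi -> lo <= clamp lo hi z <= hi.
Proof. intros; unfold clamp, Rmax, Rmin; repeat destruct Rle_dec; lra. Qed.

Lemma clamp_dist (lo hi z w : R) : Rabs (clamp lo hi z - clamp lo hi w) <= Rabs (z - w).
Proof.
  unfold clamp, Rmax, Rmin; repeat destruct Rle_dec;
    unfold Rabs; repeat destruct Rcase_abs; lra.
Qed.

Lemma MVT_one_sided (g g' : R -> R) (lo hi a b : R) :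
  lo <= a <= hi -> lo <= b <= hi ->
  (forall z, lo <= z <= hi ->
     filterlim (fun h => (g (z + h) - g z) / h)
       (within (fun h => h <> 0 /\ lo <= z + h <= hi) (locally 0)) (locally (g' z))) ->
  exists c, Rmin a b <= c <= Rmax a b /\ g b - g a = g' c * (b - a).
Proof.
  intros Ha Hb Hg.
  set (gc := fun z => g (clamp lo hi z)).
  assert (Hmin : lo <= Rmin a b) by (apply Rmin_glb; lra).
  assert (Hmax : Rmax a b <= hi) by (apply Rmax_lub; lra).
  destruct (MVT_gen gc a b g') as [c [Hc Hgc]].
  - intros z Hz; simpl in Hz; apply is_derive_Reals; intros eps Heps.
    assert (Hz' : lo <= z <= hi) by lra.
    destruct (proj1 (filterlim_locally _ (g' z)) (Hg z Hz') (mkposreal eps Heps)) as [d Hd].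
    assert (Hpos : 0 < Rmin d (Rmin (z - lo) (hi - z)))
      by (repeat apply Rmin_pos; lra || apply cond_pos).
    exists (mkposreal _ Hpos); intros h Hh0 Hh; simpl in Hh.
    pose proof (Rmin_l d (Rmin (z - lo) (hi - z))); pose proof (Rmin_r d (Rmin (z - lo) (hi - z))).
    pose proof (Rmin_l (z - lo) (hi - z)); pose proof (Rmin_r (z - lo) (hi - z)).
    apply Rabs_def2 in Hh as Hh'.
    unfold gc; rewrite (clamp_id lo hi z), (clamp_id lo hi (z + h)) by lra.
    apply (Hd h); [|split; lra].
    change (Rabs (h - 0) < d); rewrite Rminus_0_r; lra.
  - intros z Hz; simpl in Hz; apply continuity_pt_filterlim, filterlim_locally; intros eps.
    destruct (quotient_limit_continuous g z (g' z) (fun h => lo <= z + h <= hi)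
                (Hg z ltac:(lra)) eps (cond_pos eps)) as [d [Hd Hcont]].
    exists (mkposreal d Hd); intros w Hw; change (Rabs (w - z) < d) in Hw.
    change (Rabs (gc w - gc z) < eps); unfold gc.
    rewrite (clamp_id lo hi z) by lra.
    replace (clamp lo hi w) with (z + (clamp lo hi w - z)) by ring.
    apply Hcont.
    + replace (z + (clamp lo hi w - z)) with (clamp lo hi w) by ring; apply clamp_between; lra.
    + pose proof (clamp_dist lo hi w z) as Hdist; rewrite (clamp_id lo hi z) in Hdist by lra; lra.
  - exists c; split; [exact Hc|].
    unfold gc in Hgc; rewrite !clamp_id in Hgc by lra; exact Hgc.
Qed.

Lemma cont_on_dom_of_pderivs (u ux ut : R -> R -> R) :
  is_pderiv_x u ux -> is_pderiv_t u ut -> cont_on_dom ux -> cont_on_dom u.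
Proof.
  intros Hx Ht Hc x t D; apply filterlim_locally; intros eps.
  destruct (proj1 (filterlim_locally _ _) (Hc x t D) (mkposreal 1 Rlt_0_1)) as [d1 Hd1].
  assert (He2 : 0 < eps / 2) by (pose proof (cond_pos eps); lra).
  destruct (quotient_limit_continuous (fun s => u x s) t (ut x t) (fun h => 0 <= t + h)
              (Ht x t D) _ He2) as [d2 [Hd2 Hcont_t]].
  set (M := Rabs (ux x t) + 1).
  assert (HM : 0 < M) by (unfold M; pose proof (Rabs_pos (ux x t)); lra).
  assert (Hd : 0 < Rmin d1 (Rmin d2 (eps / 2 / M))).
  { repeat apply Rmin_pos; try apply cond_pos; try lra; apply Rdiv_lt_0_compat; lra. }
  exists (mkposreal _ Hd); intros [x' t'] [Hbx Hbt] D'; simpl in D'.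
  change (Rabs (x' - x) < Rmin d1 (Rmin d2 (eps / 2 / M))) in Hbx.
  change (Rabs (t' - t) < Rmin d1 (Rmin d2 (eps / 2 / M))) in Hbt.
  change (Rabs (u x' t' - u x t) < eps).
  pose proof (Rmin_l d1 (Rmin d2 (eps / 2 / M))); pose proof (Rmin_r d1 (Rmin d2 (eps / 2 / M))).
  pose proof (Rmin_l d2 (eps / 2 / M)); pose proof (Rmin_r d2 (eps / 2 / M)).
  destruct D as [Dx Dt]; destruct D' as [Dx' Dt'].
  destruct (MVT_one_sided (fun z => u z t') (fun z => ux z t') 0 1 x x' Dx Dx'
              (fun z Hz => Hx z t' (conj Hz Dt'))) as [c [Hc_between Hmvt]].
  assert (Hcx : Rabs (c - x) <= Rabs (x' - x)).
  { unfold Rmin, Rmax in Hc_between; destruct Rle_dec;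
      unfold Rabs; repeat destruct Rcase_abs; lra. }
  assert (Huxc : Rabs (ux c t') <= M).
  { assert (Hc_dom : dom c t').
    { split; [|exact Dt']; unfold Rmin, Rmax in Hc_between; destruct Rle_dec; lra. }
    assert (Hball : ball (x, t) d1 (c, t')).
    { split; change (Rabs (c - x) < d1) || change (Rabs (t' - t) < d1); lra. }
    specialize (Hd1 (c, t') Hball Hc_dom); change (Rabs (ux c t' - ux x t) < 1) in Hd1.
    unfold M; pose proof (Rabs_triang_inv (ux c t') (ux x t)); lra. }
  assert (Hspace : Rabs (u x' t' - u x t') < eps / 2).
  { rewrite Hmvt, Rabs_mult.
    assert (Rabs (x' - x) * M < eps / 2).
    { apply (Rmult_lt_reg_r (/ M)); [apply Rinv_0_lt_compat; lra|].
      rewrite Rmult_assoc, Rinv_r, Rmult_1_r by lra; unfold Rdiv in *; lra. }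
    pose proof (Rabs_pos (x' - x)); pose proof (Rabs_pos (ux c t')); nra. }
  assert (Htime : Rabs (u x t' - u x t) < eps / 2).
  { replace t' with (t + (t' - t)) by ring; apply Hcont_t; lra. }
  replace (u x' t' - u x t) with ((u x' t' - u x t') + (u x t' - u x t)) by ring.
  pose proof (Rabs_triang (u x' t' - u x t') (u x t' - u x t)); lra.
Qed.

Module BoxCompactness.
Import all_boot all_order all_algebra all_classical all_reals all_analysis Rstruct Rstruct_topology.
Import Order.TTheory GRing.Theory Num.Theory.
Local Open Scope classical_set_scope.

Lemma nbhs_Rabs_lt (x d : R) : Rlt 0 d -> nbhs x (fun z : R => Rlt (Rabs (z - x)) d).
Proof.
move=> d0; apply/nbhs_ballP; exists d; first by apply/RltP.
move=> z /=; rewrite /ball /= -RabsE => /RltP; rewrite Rabs_minus_sym //.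
Qed.

Lemma nbhs_box (p : (R * R) * R) (d : R) : Rlt 0 d ->
  nbhs p (fun q : (R * R) * R => Rlt (Rabs (q.1.1 - p.1.1)) d /\
                                 Rlt (Rabs (q.1.2 - p.1.2)) d /\ Rlt (Rabs (q.2 - p.2)) d).
Proof.
move: p => [[x y] t] d0.
exists ((fun q : R * R => Rlt (Rabs (q.1 - x)) d /\ Rlt (Rabs (q.2 - y)) d),
        (fun s : R => Rlt (Rabs (s - t)) d)).
  split => /=; last exact: nbhs_Rabs_lt.
  exists ((fun z : R => Rlt (Rabs (z - x)) d), (fun z : R => Rlt (Rabs (z - y)) d)).
    by split; apply: nbhs_Rabs_lt.
  by move=> [a b] /= [].
by move=> [[a b] c] /= [[h1 h2] h3].
Qed.

Lemma box_closed_argmin_snd (A : (R * R) * R -> Prop) (T : R) :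
  (forall p, (forall e, Rlt 0 e -> exists q, A q /\ Rlt (Rabs (q.1.1 - p.1.1)) e /\
        Rlt (Rabs (q.1.2 - p.1.2)) e /\ Rlt (Rabs (q.2 - p.2)) e) -> A p) ->
  (forall p, A p -> (Rle 0 p.1.1 /\ Rle p.1.1 1) /\ (Rle 0 p.1.2 /\ Rle p.1.2 1) /\
                    (Rle 0 p.2 /\ Rle p.2 T)) ->
  (exists p, A p) ->
  exists c, A c /\ forall q, A q -> Rle c.2 q.2.
Proof.
move=> Aclosed Abox [p0 Ap0].
pose B := (`[(0:R)%R, (1:R)%R]%classic `*` `[(0:R)%R, (1:R)%R]%classic) `*` `[(0:R)%R, T]%classic.
have cB : compact B.
  by apply: compact_setX; [apply: compact_setX|]; exact: segment_compact.
have clA : closed (A : set _).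
  move=> p Hp; apply: Aclosed => e e0.
  by have [q [Aq Nq]] := Hp _ (nbhs_box p e e0); exists q.
have AB : (A : set _) `<=` B.
  move=> p /Abox [[h1 h2] [[h3 h4] [h5 h6]]].
  by rewrite /B /= !in_itv /=; split; [split|]; apply/andP; split; apply/RleP.
have cA : compact (A : set _) by apply: (subclosed_compact clA cB AB).
have A0 : (A : set _) !=set0 by exists p0.
have csnd : {within (A : set _), continuous (fun p : (R * R) * R => p.2)}.
  by apply: continuous_subspaceT => p; exact: cvg_snd.
have [c Ac cmin] := compact_EVT_min A0 cA csnd.
exists c; split; first by move: Ac; rewrite inE.
by move=> q Aq; apply/RleP; apply: cmin; rewrite inE.
Qed.

End BoxCompactness.

Definition prism (T : R) (p : R * R * R) : Prop :=
  0 <= fst (fst p) <= snd (fst p) /\ snd (fst p) <= 1 /\ 0 <= snd p <= T.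

Lemma prism_closed (T : R) (p : R * R * R) :
  (forall e, 0 < e -> exists q, prism T q /\ Rabs (fst (fst q) - fst (fst p)) < e /\
     Rabs (snd (fst q) - snd (fst p)) < e /\ Rabs (snd q - snd p) < e) ->
  prism T p.
Proof.
  destruct p as [[x y] t]; unfold prism; simpl; intros Happrox.
  assert (Hrefute : forall e, 0 < e ->
    (forall x' y' t', prism T (x', y', t') ->
       Rabs (x' - x) < e -> Rabs (y' - y) < e -> Rabs (t' - t) < e -> False) -> False).
  { intros e He Hno; destruct (Happrox e He) as [[[x' y'] t'] [Hq [Hcx [Hcy Hct]]]].
    exact (Hno x' y' t' Hq Hcx Hcy Hct). }
  repeat split; apply Rnot_lt_le; intros Hlt;
    [ apply (Hrefute (- x)) | apply (Hrefute ((x - y) / 2)) | apply (Hrefute (y - 1))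
    | apply (Hrefute (- t)) | apply (Hrefute (t - T)) ]; try lra;
    intros x' y' t' Hq Hcx Hcy Hct; unfold prism in Hq; simpl in Hq;
    apply Rabs_def2 in Hcx, Hcy, Hct; lra.
Qed.

Definition growth_rate (f0 f1 l0 l1 g0 g1 : R) : R :=
  (f0 - f1) - l0 * g0 * f0 - l1 * g1 * f1.

Section CauchyProblem.
Variables f0 f1 l0 l1 g0 g1 : R.
Variables u ux ut : R -> R -> R.
Hypothesis Hpx : is_pderiv_x u ux.
Hypothesis Hpt : is_pderiv_t u ut.
Hypothesis Hcx : cont_on_dom ux.
Hypothesis Hpde : forall x t, 0 <= x <= 1 -> 0 < t ->
  ut x t + (f0 - f1) * (1 - x) * x * ux x t
  = l0 * f0 * J0 g0 u x t + l1 * f1 * J1 g1 u x t.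
Hypothesis Hinit : forall x, 0 <= x <= 1 -> u x 0 = x.
Hypothesis Hf1 : 0 <= f1.
Hypothesis Hsigma : 0 <= f0 - f1.
Hypothesis Hl0 : 0 <= l0.
Hypothesis Hl1 : 0 <= l1.
Hypothesis Hg0 : 0 <= g0 <= 1.
Hypothesis Hg1 : 0 <= g1 <= 1.

Local Notation rate := (growth_rate f0 f1 l0 l1 g0 g1).

Lemma u_continuous_in_prism (T : R) (p : R * R * R) (g : R * R * R -> R) :
  prism T p -> nonexpansive_at g p -> (forall q, prism T q -> 0 <= g q <= 1) ->
  filterlim (fun q => u (g q) (snd q)) (within (prism T) (locally p))
    (locally (u (g p) (snd p))).
Proof.
  intros Hp Hg Hrange.
  assert (Hu : cont_on_dom u) by exact (cont_on_dom_of_pderivs u ux ut Hpx Hpt Hcx).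
  apply (filterlim_comp _ _ _ (fun q => (g q, snd q)) (fun z => u (fst z) (snd z)) _
           (within (fun z => dom (fst z) (snd z)) (locally (g p, snd p)))).
  - apply (filterlim_within_within (fun q => (g q, snd q)) (prism T) _ p).
    + apply (filterlim_nonexpansive (fun q => (g q, snd q)) p).
      intros d q Hq; exact (conj (Hg d q Hq) (proj2 Hq)).
    + intros q Hq; split; [apply Hrange, Hq | unfold prism in Hq; simpl; lra].
  - apply Hu; split; [apply Hrange, Hp | unfold prism in Hp; lra].
Qed.

Section Increment.
Variables s a eps : R.

Definition penalized_increment (x y t : R) : R :=
  s * (u y t - u x t) - a * exp (rate * t) * (y - x) - eps * exp t.

Local Notation Phi := penalized_increment.

Lemma penalized_increment_continuous (T : R) (p : R * R * R) : prism T p ->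
  filterlim (fun q => Phi (fst (fst q)) (snd (fst q)) (snd q))
    (within (prism T) (locally p)) (locally (Phi (fst (fst p)) (snd (fst p)) (snd p))).
Proof.
  intros Hp.
  assert (Hx : nonexpansive_at (fun q : R * R * R => fst (fst q)) p)
    by (intros d q [[Hqx _] _]; exact Hqx).
  assert (Hy : nonexpansive_at (fun q : R * R * R => snd (fst q)) p)
    by (intros d q [[_ Hqy] _]; exact Hqy).
  assert (Ht : forall phi : R -> R, continuous phi (snd p) ->
    filterlim (fun q => phi (snd q)) (within (prism T) (locally p)) (locally (phi (snd p)))).
  { intros phi Hphi; apply (filterlim_comp _ _ _ snd phi _ (locally (snd p))); [|exact Hphi].
    apply filterlim_within_nonexpansive; intros d q [_ Hqt]; exact Hqt. }
  unfold Phi; apply filterlim_Rminus; [apply filterlim_Rminus|].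
  - apply filterlim_Rmult_l, filterlim_Rminus.
    + apply (u_continuous_in_prism T p _ Hp Hy); intros q Hq; unfold prism in Hq; lra.
    + apply (u_continuous_in_prism T p _ Hp Hx); intros q Hq; unfold prism in Hq; lra.
  - apply filterlim_Rmult; [apply filterlim_Rmult_l|].
    + apply (Ht (fun z => exp (rate * z))).
      apply (ex_derive_continuous (fun z => exp (rate * z))); auto_derive; exact I.
    + apply filterlim_Rminus; [exact (filterlim_within_nonexpansive _ _ _ Hy)
                              | exact (filterlim_within_nonexpansive _ _ _ Hx)].
  - apply filterlim_Rmult_l, (Ht exp), continuous_exp.
Qed.

Lemma penalized_increment_time_quotient (x y t : R) : dom x t -> dom y t ->
  filterlim (fun h => (Phi x y (t + h) - Phi x y t) / h)
    (within (fun h => h <> 0 /\ 0 <= t + h) (locally 0))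
    (locally (s * (ut y t - ut x t) - a * (rate * exp (rate * t)) * (y - x) - eps * exp t)).
Proof.
  intros Dx Dy.
  set (D := fun h => h <> 0 /\ 0 <= t + h).
  assert (HD : forall h, D h -> h <> 0) by (intros h [Hh _]; exact Hh).
  apply (filterlim_within_ext D
    (fun h => s * ((u y (t + h) - u y t) / h - (u x (t + h) - u x t) / h)
              - a * ((exp (rate * (t + h)) - exp (rate * t)) / h) * (y - x)
              - eps * ((exp (t + h) - exp t) / h))).
  { intros h Dh; unfold Phi; field; exact (HD h Dh). }
  apply filterlim_Rminus; [apply filterlim_Rminus|].
  - apply filterlim_Rmult_l, filterlim_Rminus; [exact (Hpt y t Dy) | exact (Hpt x t Dx)].
  - apply filterlim_Rmult; [apply filterlim_Rmult_l | apply filterlim_const].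
    apply (derivable_pt_lim_quotient (fun z => exp (rate * z))); [|exact HD].
    apply is_derive_Reals; auto_derive; [exact I | ring].
  - apply filterlim_Rmult_l.
    exact (derivable_pt_lim_quotient exp t (exp t) D (derivable_pt_lim_exp t) HD).
Qed.

Section Touching.
Variables x0 y0 t0 : R.
Hypothesis Ha : 0 <= a.
Hypothesis Heps : 0 < eps.
Hypothesis Hx0 : 0 <= x0.
Hypothesis Hxy0 : x0 < y0.
Hypothesis Hy0 : y0 <= 1.
Hypothesis Ht0 : 0 < t0.
Hypothesis Htouch : Phi x0 y0 t0 = 0.
Hypothesis Hbelow : forall x y, 0 <= x <= y -> y <= 1 -> Phi x y t0 <= 0.
Hypothesis Hbefore : forall h, h < 0 -> 0 <= t0 + h -> Phi x0 y0 (t0 + h) < 0.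

Local Notation A := (a * exp (rate * t0)).

Lemma touch_increment (x y : R) : 0 <= x <= y -> y <= 1 ->
  s * (u y t0 - u x t0) - s * (u y0 t0 - u x0 t0) <= A * ((y - x) - (y0 - x0)).
Proof. intros Hxy Hy; pose proof (Hbelow x y Hxy Hy); unfold Phi in *; lra. Qed.

Lemma touch_ux_left : 0 < x0 -> s * ux x0 t0 <= A.
Proof.
  intros Hx0pos.
  assert (Dx0 : dom x0 t0) by (split; lra).
  apply (filterlim_le_frequently _ _ _ (filterlim_Rmult_l s _ _ (Hpx x0 t0 Dx0))).
  apply within_locally_0_frequently; intros d Hd.
  pose proof (Rmin_l d x0); pose proof (Rmin_r d x0).
  assert (0 < Rmin d x0) by (apply Rmin_pos; lra).
  set (h := - (Rmin d x0 / 2)).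
  exists h; split; [unfold h; split; lra|]; split; [rewrite Rabs_left; unfold h; lra|].
  pose proof (touch_increment (x0 + h) y0 ltac:(unfold h; lra) Hy0).
  replace (s * ((u (x0 + h) t0 - u x0 t0) / h)) with (s * (u (x0 + h) t0 - u x0 t0) / h)
    by (field; unfold h; lra).
  apply Rdiv_le_of_neg; [unfold h; lra | lra].
Qed.

Lemma touch_ux_right : A <= s * ux y0 t0.
Proof.
  assert (Dy0 : dom y0 t0) by (split; lra).
  apply (filterlim_ge_frequently _ _ _ (filterlim_Rmult_l s _ _ (Hpx y0 t0 Dy0))).
  apply within_locally_0_frequently; intros d Hd.
  pose proof (Rmin_l d (y0 - x0)); pose proof (Rmin_r d (y0 - x0)).
  assert (0 < Rmin d (y0 - x0)) by (apply Rmin_pos; lra).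
  set (h := - (Rmin d (y0 - x0) / 2)).
  exists h; split; [unfold h; split; lra|]; split; [rewrite Rabs_left; unfold h; lra|].
  pose proof (touch_increment x0 (y0 + h) ltac:(unfold h; lra) ltac:(unfold h; lra)).
  replace (s * ((u (y0 + h) t0 - u y0 t0) / h)) with (s * (u (y0 + h) t0 - u y0 t0) / h)
    by (field; unfold h; lra).
  apply Rdiv_ge_of_neg; [unfold h; lra | lra].
Qed.

Lemma touch_jump (g : R) (x' y' : R) : 0 <= x' <= y' -> y' <= 1 ->
  y' - x' = (1 - g) * (y0 - x0) ->
  s * (u y' t0 - u x' t0) - s * (u y0 t0 - u x0 t0) <= - g * A * (y0 - x0).
Proof.
  intros Hxy Hy Hgap; pose proof (touch_increment x' y' Hxy Hy); rewrite Hgap in *; nra.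
Qed.

Lemma touch_ut_upper : s * (ut y0 t0 - ut x0 t0) <= rate * A * (y0 - x0).
Proof.
  assert (HA : 0 <= A) by (pose proof (exp_pos (rate * t0)); nra).
  assert (FOx : (1 - x0) * x0 * (s * ux x0 t0) <= (1 - x0) * x0 * A).
  { destruct (Req_dec x0 0) as [->|Hx0ne]; [lra|].
    apply Rmult_le_compat_l; [nra | apply touch_ux_left; lra]. }
  assert (FOy : (1 - y0) * y0 * A <= (1 - y0) * y0 * (s * ux y0 t0)).
  { apply Rmult_le_compat_l; [nra | exact touch_ux_right]. }
  assert (HJ0 : s * (J0 g0 u y0 t0 - J0 g0 u x0 t0) <= - g0 * A * (y0 - x0)).
  { pose proof (touch_jump g0 (x0 + g0 * (1 - x0)) (y0 + g0 * (1 - y0))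
                  ltac:(nra) ltac:(nra) ltac:(ring)).
    unfold J0; lra. }
  assert (HJ1 : s * (J1 g1 u y0 t0 - J1 g1 u x0 t0) <= - g1 * A * (y0 - x0)).
  { pose proof (touch_jump g1 (x0 - g1 * x0) (y0 - g1 * y0) ltac:(nra) ltac:(nra) ltac:(ring)).
    unfold J1; lra. }
  assert (Hut : s * (ut y0 t0 - ut x0 t0)
    = l0 * f0 * (s * (J0 g0 u y0 t0 - J0 g0 u x0 t0))
      + l1 * f1 * (s * (J1 g1 u y0 t0 - J1 g1 u x0 t0))
      - (f0 - f1) * ((1 - y0) * y0 * (s * ux y0 t0) - (1 - x0) * x0 * (s * ux x0 t0))).
  { pose proof (Hpde x0 t0 ltac:(lra) Ht0); pose proof (Hpde y0 t0 ltac:(lra) Ht0).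
    replace (ut x0 t0) with (l0 * f0 * J0 g0 u x0 t0 + l1 * f1 * J1 g1 u x0 t0
                             - (f0 - f1) * (1 - x0) * x0 * ux x0 t0) by lra.
    replace (ut y0 t0) with (l0 * f0 * J0 g0 u y0 t0 + l1 * f1 * J1 g1 u y0 t0
                             - (f0 - f1) * (1 - y0) * y0 * ux y0 t0) by lra.
    ring. }
  assert (I0 : l0 * f0 * (s * (J0 g0 u y0 t0 - J0 g0 u x0 t0)) <= l0 * f0 * (- g0 * A * (y0 - x0)))
    by (apply Rmult_le_compat_l; [nra | exact HJ0]).
  assert (I1 : l1 * f1 * (s * (J1 g1 u y0 t0 - J1 g1 u x0 t0)) <= l1 * f1 * (- g1 * A * (y0 - x0)))
    by (apply Rmult_le_compat_l; [nra | exact HJ1]).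
  assert (I2 : (f0 - f1) * ((1 - y0) * y0 * A - (1 - x0) * x0 * A)
               <= (f0 - f1) * ((1 - y0) * y0 * (s * ux y0 t0) - (1 - x0) * x0 * (s * ux x0 t0)))
    by (apply Rmult_le_compat_l; lra).
  (* (1 - y0) y0 - (1 - x0) x0 = (y0 - x0) (1 - x0 - y0) *)
  assert (I3 : 0 <= (f0 - f1) * A * (y0 - x0) * (2 - x0 - y0)).
  { apply Rmult_le_pos; [apply Rmult_le_pos; [apply Rmult_le_pos|]|]; lra. }
  rewrite Hut; set (E := exp (rate * t0)) in *; unfold growth_rate; lra.
Qed.

Lemma touch_ut_lower :
  a * (rate * exp (rate * t0)) * (y0 - x0) + eps * exp t0 <= s * (ut y0 t0 - ut x0 t0).
Proof.
  cut (0 <= s * (ut y0 t0 - ut x0 t0) - a * (rate * exp (rate * t0)) * (y0 - x0) - eps * exp t0);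
    [lra|].
  assert (Dx0 : dom x0 t0) by (split; lra).
  assert (Dy0 : dom y0 t0) by (split; lra).
  apply (filterlim_ge_frequently _ _ _ (penalized_increment_time_quotient x0 y0 t0 Dx0 Dy0)).
  apply within_locally_0_frequently; intros d Hd.
  pose proof (Rmin_l d t0); pose proof (Rmin_r d t0).
  assert (0 < Rmin d t0) by (apply Rmin_pos; lra).
  set (h := - (Rmin d t0 / 2)).
  exists h; split; [unfold h; split; lra|]; split; [rewrite Rabs_left; unfold h; lra|].
  rewrite Htouch, Rminus_0_r.
  apply Rdiv_ge_of_neg; [unfold h; lra|].
  rewrite Rmult_0_l; left; apply Hbefore; unfold h; lra.
Qed.

Lemma no_touching : False.
Proof.
  pose proof touch_ut_upper; pose proof touch_ut_lower; pose proof (exp_pos t0).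
  assert (0 < eps * exp t0) by (apply Rmult_lt_0_compat; lra).
  lra.
Qed.

End Touching.

Lemma first_nonneg_time (T : R) :
  (exists p, prism T p /\ 0 <= Phi (fst (fst p)) (snd (fst p)) (snd p)) ->
  exists p, (prism T p /\ 0 <= Phi (fst (fst p)) (snd (fst p)) (snd p)) /\
    forall q, prism T q -> 0 <= Phi (fst (fst q)) (snd (fst q)) (snd q) -> snd p <= snd q.
Proof.
  intros Hex.
  destruct (BoxCompactness.box_closed_argmin_snd
    (fun p => prism T p /\ 0 <= Phi (fst (fst p)) (snd (fst p)) (snd p)) T) as [p [Ap Hmin]].
  - intros p Happrox.
    assert (Hp : prism T p).
    { apply prism_closed; intros e He; destruct (Happrox e He) as [q [[Hq _] Hclose]].
      exists q; split; assumption. }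
    split; [exact Hp|].
    apply (filterlim_ge_frequently _ _ _ (penalized_increment_continuous T p Hp)).
    intros P [d Hd]; destruct (Happrox d (cond_pos d)) as [q [[Hq Hnonneg] [H1 [H2 H3]]]].
    exists q; split; [apply Hd; [exact (conj (conj H1 H2) H3) | exact Hq] | exact Hnonneg].
  - intros p [Hp _]; unfold prism in Hp; lra.
  - exact Hex.
  - exists p; split; [exact Ap|]; intros q Hq Hnonneg; exact (Hmin q (conj Hq Hnonneg)).
Qed.

Lemma penalized_increment_nonpos_at (T t0 : R) : 0 < t0 <= T ->
  (forall x y t, 0 <= x <= y -> y <= 1 -> 0 <= t < t0 -> Phi x y t < 0) ->
  forall x y, 0 <= x <= y -> y <= 1 -> Phi x y t0 <= 0.
Proof.
  intros Ht0 Hearlier x y Hx Hy.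
  assert (Hp : prism T (x, y, t0)) by (unfold prism; simpl; lra).
  apply (filterlim_le_frequently _ _ _ (penalized_increment_continuous T _ Hp)).
  intros P [d Hd].
  pose proof (cond_pos d); pose proof (Rmin_l d t0); pose proof (Rmin_r d t0).
  assert (0 < Rmin d t0) by (apply Rmin_pos; lra).
  set (k := Rmin d t0 / 2).
  exists (x, y, t0 - k); split.
  - apply Hd; [|unfold prism, k; simpl; lra].
    repeat split; [change (Rabs (x - x) < d) | change (Rabs (y - y) < d)
                  | change (Rabs (t0 - k - t0) < d)];
      rewrite ?Rminus_diag, ?Rabs_R0; [lra | lra|].
    replace (t0 - k - t0) with (- k) by ring; rewrite Rabs_Ropp, Rabs_right; unfold k; lra.
  - left; simpl; apply Hearlier; unfold k; lra.
Qed.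

Lemma penalized_increment_neg : s <= a -> 0 <= a -> 0 < eps ->
  forall x y t, 0 <= x <= y -> y <= 1 -> 0 <= t -> Phi x y t < 0.
Proof.
  intros Hsa Ha Heps x y t Hxy Hy Ht; apply Rnot_le_lt; intros Hge.
  destruct (first_nonneg_time t) as [[[x0 y0] t0] [[Hprism Hnonneg] Hfirst]].
  { exists (x, y, t); split; [unfold prism; simpl; lra | exact Hge]. }
  unfold prism in Hprism; simpl in *.
  assert (Hearlier : forall x' y' t', 0 <= x' <= y' -> y' <= 1 -> 0 <= t' < t0 -> Phi x' y' t' < 0).
  { intros x' y' t' Hx' Hy' Ht'; apply Rnot_le_lt; intros H.
    specialize (Hfirst (x', y', t') ltac:(unfold prism; simpl; lra) H); simpl in Hfirst; lra. }
  assert (Ht0 : 0 < t0).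
  { destruct (Req_dec t0 0) as [->|]; [|lra].
    unfold Phi in Hnonneg; rewrite !Hinit, Rmult_0_r, exp_0 in Hnonneg by lra; nra. }
  pose proof (penalized_increment_nonpos_at t t0 ltac:(lra) Hearlier) as Hbelow.
  assert (Htouch : Phi x0 y0 t0 = 0) by (pose proof (Hbelow x0 y0 ltac:(lra) ltac:(lra)); lra).
  assert (Hxy0 : x0 < y0).
  { destruct (Req_dec x0 y0) as [<-|]; [|lra].
    unfold Phi in Htouch; rewrite Rminus_diag in Htouch; pose proof (exp_pos t0); nra. }
  apply (no_touching x0 y0 t0); try assumption; try lra.
  intros h Hh Hth; apply Hearlier; lra.
Qed.

End Increment.

Lemma increment_bound (s a : R) : s <= a -> 0 <= a ->
  forall x y t, 0 <= x <= y -> y <= 1 -> 0 <= t ->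
  s * (u y t - u x t) <= a * exp (rate * t) * (y - x).
Proof.
  intros Hsa Ha x y t Hxy Hy Ht; apply Rnot_lt_le; intros Hlt.
  set (gap := s * (u y t - u x t) - a * exp (rate * t) * (y - x)).
  pose proof (exp_pos t).
  assert (Heps : 0 < gap / (2 * exp t)) by (apply Rdiv_lt_0_compat; unfold gap; lra).
  pose proof (penalized_increment_neg s a (gap / (2 * exp t)) Hsa Ha Heps x y t Hxy Hy Ht) as Hneg.
  unfold penalized_increment in Hneg.
  replace (gap / (2 * exp t) * exp t) with (gap / 2) in Hneg by (field; lra).
  unfold gap in *; lra.
Qed.

Lemma ux_bounds (t x : R) : 0 <= t -> 0 <= x <= 1 -> 0 <= ux x t <= exp (rate * t).
Proof.
  intros Ht Hx.
  set (B := exp (rate * t)).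
  assert (Hincr : forall x' y', 0 <= x' <= y' -> y' <= 1 -> 0 <= u y' t - u x' t <= B * (y' - x')).
  { intros x' y' Hxy Hy.
    pose proof (increment_bound (-1) 0 ltac:(lra) ltac:(lra) x' y' t Hxy Hy Ht) as Hlo.
    pose proof (increment_bound 1 1 ltac:(lra) ltac:(lra) x' y' t Hxy Hy Ht) as Hhi.
    fold B in Hlo, Hhi; lra. }
  set (D := fun h => h <> 0 /\ 0 <= x + h <= 1).
  assert (Hquot : forall h, D h -> 0 <= (u (x + h) t - u x t) / h <= B).
  { intros h [Hh Hxh]; apply Rdiv_between; [exact Hh|].
    destruct (Rlt_or_le 0 h).
    - pose proof (Hincr x (x + h) ltac:(lra) ltac:(lra)); split; nra.
    - pose proof (Hincr (x + h) x ltac:(lra) ltac:(lra)); split; nra. }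
  assert (Hsmall : forall d, 0 < d -> exists h, D h /\ Rabs h < d).
  { intros d Hd; destruct (Rlt_or_le x 1).
    - pose proof (Rmin_l d (1 - x)); pose proof (Rmin_r d (1 - x)).
      assert (0 < Rmin d (1 - x)) by (apply Rmin_pos; lra).
      exists (Rmin d (1 - x) / 2); split; [split; lra | rewrite Rabs_right; lra].
    - pose proof (Rmin_l d 1); pose proof (Rmin_r d 1).
      assert (0 < Rmin d 1) by (apply Rmin_pos; lra).
      exists (- (Rmin d 1 / 2)); split; [split; lra | rewrite Rabs_left; lra]. }
  assert (Hlim := Hpx x t (conj Hx Ht)).
  split; [apply (filterlim_ge_frequently _ _ _ Hlim) | apply (filterlim_le_frequently _ _ _ Hlim)];
    apply within_locally_0_frequently; intros d Hd;
    destruct (Hsmall d Hd) as [h [Dh Hh]]; exists h;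
    (split; [exact Dh | split; [exact Hh | apply (Hquot h Dh)]]).
Qed.

End CauchyProblem.

Theorem lemma4p2 (f0 f1 l0 l1 g0 g1 : R) (u ux ut : R -> R -> R) :
  0 < f0 -> 0 <= f1 -> 0 < f0 - f1 ->
  0 <= l0 -> 0 <= l1 ->
  0 < g0 <= 1 -> 0 < g1 <= 1 ->
  is_solution f0 f1 l0 l1 g0 g1 u ux ut ->
  forall t x, 0 < t -> 0 <= x <= 1 ->
    0 <= ux x t <=
    exp (((f0 - f1) - (l0 * g0) * f0 - (l1 * g1) * f1) * t).
Proof.
  intros _ Hf1 Hsigma Hl0 Hl1 Hg0 Hg1 [[Hpx [Hpt [Hcx _]]] [Hpde Hinit]] t x Ht Hx.
  apply (ux_bounds f0 f1 l0 l1 g0 g1 u ux ut); auto; lra.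
Qed.
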